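(* Let $G$ be a connected outerplanar graph given with an outerplanar (all vertices on the outer face) planar embedding, and let a new edge $(p,q)$ between two existing vertices arrive in the ordered streaming model, i.e., together with its position in the clockwise order of edges around $p$ and around $q$, such that the resulting graph is outerplanar. If at least one of $p,q$ has degree greater than $1$ in $G$, then this information about the relative order of incident edges determines the embedding of the new edge uniquely: there is only one way to draw $(p,q)$ consistent with the given edge orders so that the resulting drawing is planar with all vertices on the outer face.
   Context: A graph is outerplanar if it has a planar drawing in which every vertex lies on the outer face. In the ordered streaming model, each new edge comes with its position in the clockwise cyclic order of edges incident to each of its endpoints. *)

From mathcomp Require Import all_boot.
Set Implicit Arguments. Unset Strict Implicit. Unset Printing Implicit Defensive.

Section Embeddings.
Variable V : finType.

Definition simple_graph (g : rel V) : Prop :=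
  (forall u v, g u v = g v u) /\ (forall u, ~~ g u u).

Definition connected_graph (g : rel V) : Prop := forall x y, connect g x y.

Definition degree (g : rel V) (u : V) : nat := #|[set v | g u v]|.

Definition darts (g : rel V) : {set V * V} := [set d | g d.1 d.2].

(* A rotation system: rot u v is the neighbour following v in the clockwise
   cyclic order of the neighbours of u; rot u must be a cyclic permutation of
   the neighbourhood of u. *)
Definition rotation_system (g : rel V) (rot : V -> V -> V) : Prop :=
  [/\ (forall u v, g u v -> g u (rot u v)),
      (forall u v w, g u v -> g u w -> rot u v = rot u w -> v = w)
    & (forall u v w, g u v -> g u w -> exists n, iter n (rot u) v = w)].

(* face-tracing permutation on darts and the faces (its orbits) *)
Definition face_step (rot : V -> V -> V) (d : V * V) : V * V :=
  (d.2, rot d.2 d.1).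

Definition face (rot : V -> V -> V) (d : V * V) : {set V * V} :=
  [set x | fconnect (face_step rot) d x].

Definition num_faces (g : rel V) (rot : V -> V -> V) : nat :=
  #|[set face rot d | d in darts g]|.

(* genus 0 (Euler's formula V - E + F = 2 for connected graphs) *)
Definition planar_rotation (g : rel V) (rot : V -> V -> V) : Prop :=
  #|V| + num_faces g rot = (#|darts g| %/ 2) + 2.

Definition outerplanar_embedding (g : rel V) (rot : V -> V -> V)
    (F : {set V * V}) : Prop :=
  [/\ rotation_system g rot, planar_rotation g rot,
      (exists2 d, d \in darts g & F = face rot d)
    & (forall x, exists y, (x, y) \in F)].

Definition add_edge (g : rel V) (p q : V) : rel V :=
  fun u v => [|| g u v, (u == p) && (v == q) | (u == q) && (v == p)].

(* rot' (a rotation of G + pq) restricts to rot on G, with the new edge pq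
   inserted immediately after edge pa (clockwise) at p and immediately after
   edge qb at q. *)
Definition inserted_rotation (g : rel V) (rot rot' : V -> V -> V)
    (p q a b : V) : Prop :=
  [/\ (forall u v, g u v ->
         rot' u v = if (u == p) && (v == a) then q
                    else if (u == q) && (v == b) then p else rot u v),
      rot' p q = rot p a
    & rot' q p = rot q b].

End Embeddings.

From mathcomp Require Import all_boot zify.
Set Implicit Arguments. Unset Strict Implicit. Unset Printing Implicit Defensive.

(* Both embeddings of G + pq extend the rotation of G in the prescribed way, so
   they share one rotation system and can only differ in the choice of outer
   face. If two distinct faces F1, F2 each pass through every vertex, each has
   at least |V| darts while every other face has at least three, and Euler's
   formula leaves no room: F1 and F2 are the only faces and each passes through
   every vertex exactly once. Every vertex then has degree at most two in G + pq,
   so p and q both had degree one in G. *)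

Section IterIn.
Variables (T : finType) (f g : T -> T) (D : {set T}).
Hypotheses (eq_fg : {in D, f =1 g}) (fD : {in D, forall x, f x \in D}).

Lemma iter_in n : {in D, forall x, iter n f x \in D}.
Proof. by elim: n => // n IHn x Dx /=; apply/fD/IHn. Qed.

Lemma eq_iter_in n : {in D, forall x, iter n f x = iter n g x}.
Proof. by elim: n => // n IHn x Dx /=; rewrite -IHn // eq_fg ?iter_in. Qed.

Lemma fconnect_in x y : x \in D -> fconnect f x y -> y \in D.
Proof. by move=> Dx /iter_findex <-; apply: iter_in. Qed.

Lemma eq_fconnect_in x : x \in D -> fconnect f x =1 fconnect g x.
Proof.
move=> Dx y; apply/idP/idP => /iter_findex <-.
  by rewrite eq_iter_in ?fconnect_iter.
by rewrite -eq_iter_in ?fconnect_iter.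
Qed.

End IterIn.

Lemma even_card_fixfree_involution (T : finType) (r : T -> T) (D : {set T}) :
  involutive r -> {in D, forall x, r x \in D /\ r x != x} -> ~~ odd #|D|.
Proof.
move=> rK; have [n] := ubnP #|D|; elim: n D => // n IHn D ltDn rD.
have [->|[x Dx]] := set_0Vmem D; first by rewrite cards0.
have [rxD rxx] := rD x Dx.
have pairD : [set x; r x] \subset D by rewrite subUset !sub1set Dx rxD.
have cardD : #|D| = 2 + #|D :\: [set x; r x]|.
  by rewrite -(cardsID [set x; r x]) (setIidPr pairD) cards2 eq_sym rxx.
have rD' : {in D :\: [set x; r x], forall y, r y \in D :\: [set x; r x] /\ r y != y}.
  move=> y; rewrite !inE negb_or => /andP[/andP[yx yrx] Dy].
  have [ryD ryy] := rD y Dy.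
  by rewrite ?inE ryD (inv_eq rK) (can_eq rK) (negbTE yx) (negbTE yrx).
rewrite cardD /= negbK; apply: IHn rD'; move: ltDn; rewrite cardD; lia.
Qed.

Section Faces.
Variables (V : finType) (h : rel V) (R : V -> V -> V).
Hypotheses (h_sym : forall u v, h u v = h v u) (h_irr : forall u, ~~ h u u).
Hypothesis rotR : rotation_system h R.

Lemma even_card_darts : ~~ odd #|darts h|.
Proof.
apply: (@even_card_fixfree_involution _ (fun d => (d.2, d.1))) => [[]//|[u v]].
rewrite !inE /= => huv; split; first by rewrite h_sym.
by apply: contraTneq huv => -[-> _]; apply: h_irr.
Qed.

Lemma face_step_dart d : d \in darts h -> face_step R d \in darts h.
Proof. by case: rotR => rot_nb _ _; rewrite !inE => hd; apply: rot_nb; rewrite h_sym. Qed.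

Definition face_perm d := if d \in darts h then face_step R d else d.

Lemma face_perm_inj : injective face_perm.
Proof.
case: rotR => _ rot_inj _ [x1 x2] [y1 y2]; rewrite /face_perm.
case Dx: (_ \in darts h); case Dy: (_ \in darts h) => //.
- move: Dx Dy; rewrite !inE /= => hx hy [Exy2 Erot]; subst y2.
  by rewrite (rot_inj x2 x1 y1) // h_sym.
- by move=> E; move: (face_step_dart Dx); rewrite E Dy.
- by move=> E; move: (face_step_dart Dy); rewrite -E Dx.
Qed.

Lemma face_perm_dart : {in darts h, forall d, face_perm d \in darts h}.
Proof. by move=> d Dd; rewrite /face_perm Dd face_step_dart. Qed.

Lemma face_perm_face d : d \in darts h ->
  face R d = [set e in darts h | fconnect face_perm d e].
Proof.
move=> Dd; apply/setP => e; rewrite [LHS]inE [RHS]inE.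
have step_perm : {in darts h, face_step R =1 face_perm}.
  by move=> d' Dd'; rewrite /face_perm Dd'.
rewrite (eq_fconnect_in step_perm (fun d' Dd' => face_step_dart Dd') Dd).
by rewrite andb_idl // => /(fconnect_in face_perm_dart Dd).
Qed.

Definition faces := [set face R d | d in darts h].

Lemma faces_partition : partition faces (darts h).
Proof.
have -> : faces = equivalence_partition (fconnect face_perm) (darts h).
  by apply: eq_in_imset => d Dd; rewrite face_perm_face.
apply: equivalence_partitionP => x y z _ _ _; split; first exact: connect0.
move=> xy; apply/idP/idP; last exact: connect_trans.
by apply: connect_trans; rewrite (fconnect_sym face_perm_inj).
Qed.

Lemma face_refl d : d \in face R d.
Proof. by rewrite inE connect0. Qed.

Lemma eq_face_in (R' : V -> V -> V) d : (forall u v, h u v -> R' u v = R u v) ->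
  d \in darts h -> face R' d = face R d.
Proof.
move=> eqR Dd; apply/setP => e; rewrite !inE.
have step_eq : {in darts h, face_step R' =1 face_step R}.
  by move=> [u v]; rewrite inE /face_step /= => huv; rewrite eqR // h_sym.
have step_dart' : {in darts h, forall d, face_step R' d \in darts h}.
  by move=> d' Dd'; rewrite step_eq ?face_step_dart.
by rewrite (eq_fconnect_in step_eq step_dart' Dd).
Qed.

Lemma rot_fixed_neighbour u v : h u v -> R u v = v -> forall w, h u w -> w = v.
Proof. by case: rotR => _ _ orbit huv Ruv w /(orbit u v w huv) [n <-]; apply: iter_fix. Qed.

Section Connected.
Hypotheses (h_conn : connected_graph h) (card_V : 2 < #|V|).

Lemma no_isolated_edge u v :
  ~ ((forall w, h u w -> w = v) /\ (forall w, h v w -> w = u)).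
Proof.
move=> [Nu Nv]; set S := [set u; v].
have nbS x y : h x y -> x \in S -> y \in S.
  by move=> hxy; rewrite !inE => /orP[]/eqP Ex; rewrite Ex in hxy;
    rewrite ?(Nu y hxy) ?(Nv y hxy) eqxx ?orbT.
have closedS : closed h (mem S).
  by move=> x y hxy; apply/idP/idP; apply: nbS; rewrite // h_sym.
have : #|[set: V]| <= #|S|.
  apply/subset_leq_card/subsetP => x _.
  by rewrite -(closed_connect closedS (h_conn u x)) !inE eqxx.
by rewrite cardsT cards2; move: card_V; case: (u != v) => /=; lia.
Qed.

Lemma face_card_gt2 d : d \in darts h -> 2 < #|face R d|.
Proof.
case: rotR => rot_nb _ _; case: d => u v; rewrite inE /= => huv.
have hvu : h v u by rewrite h_sym.
set w := R v u; set z := R w v.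
have hvw : h v w by apply: rot_nb.
have neq_uv : u != v by apply: contraTneq huv => ->.
have neq_vw : v != w by apply: contraTneq hvw => ->.
have neq_uvwz : (u, v) != (w, z).
  apply/eqP => -[Ewu Ezv]; apply: (@no_isolated_edge u v); split.
  - by apply: (rot_fixed_neighbour huv); rewrite {1}Ewu -/z -Ezv.
  - by apply: (rot_fixed_neighbour hvu); rewrite {2}Ewu.
have sub3 : (u, v) |: [set (v, w); (w, z)] \subset face R (u, v).
  rewrite !subUset !sub1set face_refl !inE.
  by rewrite (fconnect_iter _ 1 (u, v)) (fconnect_iter _ 2 (u, v)).
apply: leq_trans (subset_leq_card sub3).
rewrite cardsU1 cards2 !inE negb_or neq_uvwz xpair_eqE negb_and neq_uv.
by rewrite xpair_eqE negb_and neq_vw.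
Qed.

Hypothesis planarR : planar_rotation h R.

Lemma two_covering_faces F1 F2 : F1 \in faces -> F2 \in faces -> F1 != F2 ->
  #|V| <= #|F1| -> #|V| <= #|F2| ->
  [/\ darts h \subset F1 :|: F2, #|F1| = #|V| & #|F2| = #|V|].
Proof.
move=> F1f F2f neqF V_F1 V_F2.
set others := [set X in faces | (X != F1) && (X != F2)].
have F2f' : (F2 \in faces) && (F2 != F1) by rewrite F2f eq_sym neqF.
have sum_faces : #|darts h| = #|F1| + (#|F2| + \sum_(X in others) #|X|).
  rewrite (card_partition faces_partition) (bigD1 F1 F1f) (bigD1 F2 F2f') /=.
  by congr (_ + (_ + _)); apply: eq_bigl => X; rewrite inE andbA.
have others_big : 3 * #|others| <= \sum_(X in others) #|X|.
  rewrite mulnC -sum_nat_const; apply: leq_sum => X.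
  by rewrite inE => /andP[/imsetP[d Dd ->] _]; apply: face_card_gt2.
have card_faces : #|faces| = #|others| + 2.
  rewrite (cardD1 F1) (cardD1 F2 [predD1 faces & F1]) F1f !inE F2f eq_sym neqF.
  suff -> : #|[predD1 [predD1 faces & F1] & F2]| = #|others| by lia.
  by apply: eq_card => X; rewrite !inE; case: (X \in faces) (X != F1) (X != F2) => [] [] [].
have euler : #|V| + (#|others| + 2) = #|darts h| %/ 2 + 2.
  by rewrite -card_faces; exact: planarR.
have half : #|darts h| = #|darts h| %/ 2 * 2.
  by rewrite {1}(divn_eq #|darts h| 2) modn2 (negbTE even_card_darts) addn0.
(* With k := #|others|, Euler gives |darts| = 2|V| + 2k while the face sizes
   give |darts| >= 2|V| + 3k. *)
have [no_others cF1 cF2] : [/\ #|others| = 0, #|F1| = #|V| & #|F2| = #|V|] by split; lia.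
split=> //; apply/subsetP => d Dd.
have : face R d \notin others by rewrite (card0_eq no_others).
rewrite inE imset_f //= negb_and !negbK => /orP[]/eqP <-;
  by rewrite in_setU face_refl ?orbT.
Qed.

End Connected.
End Faces.

Section TailInjective.
Variable V : finType.

Lemma covering_fst_imset (F : {set V * V}) :
  (forall x, exists y, (x, y) \in F) -> fst @: F = [set: V].
Proof.
move=> covF; apply/setP => x; rewrite inE.
by have [y Fxy] := covF x; apply/imsetP; exists (x, y).
Qed.

Lemma covering_card_ge (F : {set V * V}) :
  (forall x, exists y, (x, y) \in F) -> #|V| <= #|F|.
Proof. by move/covering_fst_imset; rewrite -cardsT => <-; apply: leq_imset_card. Qed.

Lemma covering_fst_inj (F : {set V * V}) :
  (forall x, exists y, (x, y) \in F) -> #|F| = #|V| -> {in F &, injective fst}.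
Proof. by move=> /covering_fst_imset fstF cardF; apply/imset_injP; rewrite fstF cardsT cardF. Qed.

Lemma card_tail_le1 (F : {set V * V}) x :
  {in F &, injective fst} -> #|[set d in F | d.1 == x]| <= 1.
Proof.
move=> injF; apply/card_le1_eqP => d e.
rewrite !inE => /andP[Fd /eqP dx] /andP[Fe /eqP ex].
by apply: injF; rewrite ?dx ?ex.
Qed.

Lemma neighbours_le2 (h : rel V) (F1 F2 : {set V * V}) x :
  darts h \subset F1 :|: F2 -> {in F1 &, injective fst} -> {in F2 &, injective fst} ->
  degree h x <= 2.
Proof.
move=> dartsF inj1 inj2; rewrite /degree.
have pair_inj : injective (@pair V V x) by move=> v w [].
rewrite -(card_imset _ pair_inj).
apply: leq_trans (leq_add (card_tail_le1 x inj1) (card_tail_le1 x inj2)).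
apply: leq_trans (leq_card_setU _ _); apply/subset_leq_card/subsetP => d /imsetP[v].
rewrite inE => hxv ->.
have /setUP[F1xv|F2xv] : (x, v) \in F1 :|: F2 by apply: (subsetP dartsF); rewrite inE.
  by rewrite !inE F1xv eqxx.
by rewrite !inE F2xv eqxx orbT.
Qed.

End TailInjective.

Section AddEdge.
Variables (V : finType) (g : rel V) (p q : V).

Lemma add_edgeC : add_edge g p q =2 add_edge g q p.
Proof. by move=> u v; rewrite /add_edge; congr (_ || _); apply: orbC. Qed.

Lemma add_edge_simple : simple_graph g -> p != q -> simple_graph (add_edge g p q).
Proof.
move=> [g_sym g_irr] neq_pq; split=> [u v|u].
  by rewrite /add_edge g_sym; congr (_ || _); rewrite orbC !(andbC (v == _)).
rewrite /add_edge (negbTE (g_irr u)) /=.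
by apply/negP => /orP[]/andP[/eqP-> /eqP Eu]; rewrite Eu eqxx in neq_pq.
Qed.

Lemma add_edge_connected : connected_graph g -> connected_graph (add_edge g p q).
Proof.
move=> g_conn x y; apply: connect_sub (g_conn x y) => u v guv.
by apply: connect1; rewrite /add_edge guv.
Qed.

Lemma degree_add_edge_l : ~~ g p q -> degree (add_edge g p q) p = (degree g p).+1.
Proof.
move=> ngpq; rewrite /degree.
have -> : [set v | add_edge g p q p v] = q |: [set v | g p v].
  apply/setP => v; rewrite !inE /add_edge eqxx /=.
  case: (v =P q) => [->|/eqP/negbTE nvq]; first by rewrite orbT.
  by case: (p =P q) => [->|_] /=; rewrite ?nvq orbF.
by rewrite cardsU1 inE ngpq.
Qed.

Lemma inserted_rotation_eq (rot rot1 rot2 : V -> V -> V) a b :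
  inserted_rotation g rot rot1 p q a b -> inserted_rotation g rot rot2 p q a b ->
  forall u v, add_edge g p q u v -> rot1 u v = rot2 u v.
Proof.
move=> [old1 p1 q1] [old2 p2 q2] u v.
rewrite /add_edge => /or3P[guv|/andP[/eqP-> /eqP->]|/andP[/eqP-> /eqP->]] //.
- by rewrite old1 // old2.
- by rewrite p1 p2.
- by rewrite q1 q2.
Qed.

End AddEdge.

Lemma degree_add_edge_r (V : finType) (g : rel V) (p q : V) :
  ~~ g q p -> degree (add_edge g p q) q = (degree g q).+1.
Proof.
by move=> ngqp; rewrite -(degree_add_edge_l ngqp); apply: eq_card => v; rewrite !inE add_edgeC.
Qed.

Theorem lemma1 (V : finType) (g : rel V) (rot : V -> V -> V) (F0 : {set V * V})
    (p q a b : V) :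
  simple_graph g -> connected_graph g ->
  outerplanar_embedding g rot F0 ->
  p != q -> ~~ g p q ->
  g p a -> g q b ->
  (1 < degree g p) || (1 < degree g q) ->
  (exists rot' F', outerplanar_embedding (add_edge g p q) rot' F' /\
                   inserted_rotation g rot rot' p q a b) ->
  forall rot1 F1 rot2 F2,
    outerplanar_embedding (add_edge g p q) rot1 F1 ->
    inserted_rotation g rot rot1 p q a b ->
    outerplanar_embedding (add_edge g p q) rot2 F2 ->
    inserted_rotation g rot rot2 p q a b ->
    (forall u v, add_edge g p q u v -> rot1 u v = rot2 u v) /\ F1 = F2.
Proof.
move=> g_simple g_conn _ neq_pq ngpq gpa _ deg_pq _ rot1 F1 rot2 F2 O1 I1 O2 I2.
have eq_rot := inserted_rotation_eq I1 I2.
split=> //.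
have [h_sym h_irr] := add_edge_simple g_simple neq_pq.
case: O1 O2 => rot1S planar1 [d1 D1 ->] cov1 [_ _ [d2 D2 ->] cov2].
have eq_rot21 u v : add_edge g p q u v -> rot2 u v = rot1 u v by move/eq_rot.
rewrite (eq_face_in h_sym rot1S eq_rot21 D2) in cov2 *.
apply/eqP/negPn/negP => neF.
have card_V : 2 < #|V|.
  have [_ g_irr] := g_simple.
  have neq_ap : a != p by apply: contraTneq gpa => ->.
  have neq_aq : a != q by apply: contraTneq gpa => ->.
  rewrite -cardsT; apply: leq_trans (subset_leq_card (subsetT (a |: [set p; q]))).
  by rewrite cardsU1 cards2 !inE neq_pq negb_or neq_ap neq_aq.
have [dartsF cardF1 cardF2] := two_covering_faces h_sym h_irr rot1S
  (add_edge_connected p q g_conn) card_V planar1 (imset_f _ D1) (imset_f _ D2) neF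
  (covering_card_ge cov1) (covering_card_ge cov2).
have deg_le2 x : degree (add_edge g p q) x <= 2.
  exact: neighbours_le2 dartsF (covering_fst_inj cov1 cardF1) (covering_fst_inj cov2 cardF2).
have ngqp : ~~ g q p by case: g_simple => g_sym _; rewrite g_sym.
move: deg_pq (deg_le2 p) (deg_le2 q).
rewrite degree_add_edge_l // degree_add_edge_r // => /orP[]; lia.
Qed.
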